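(* (a) If $x,y\in I$, then $xy\in I$ and $yx\in I$. (b) If $x,y\in\beta\mathbb{N}$ with $x\in I$ and $y\notin I$, then $xy\in I$ and $yx\in I$.
   Context: $\mathbb{N}=\{1,2,3,\dots\}$; $\beta\mathbb{N}$ is the set of ultrafilters on $\mathbb{N}$ (Stone–Čech compactification, naturals identified with principal ultrafilters), with multiplication: $A\in xy$ iff $\{n\in\mathbb{N}:A/n\in y\}\in x$, where $A/n=\{m:mn\in A\}$. For $A\subseteq\mathbb{N}$, $\overline{A}=\{x\in\beta\mathbb{N}:A\in x\}$. $P$ is the set of primes, $L_0=\{1\}$, $L_n=\{a_1\cdots a_n:a_i\in P\}$. $I=\bigcap_{i=0}^\infty\overline{\mathbb{N}\setminus L_i}$ (ultrafilters containing none of the $L_i$). *)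

From mathcomp Require Import all_boot.
Set Implicit Arguments. Unset Strict Implicit. Unset Printing Implicit Defensive.

(* Subsets of the naturals, as predicates on nat. The ambient set
   N = {1,2,3,...} is represented by the predicate [Npos]. *)
Definition nset := nat -> Prop.

Definition Npos : nset := fun n => 0 < n.

Definition is_ultrafilter (U : nset -> Prop) : Prop :=
  [/\ U Npos,
      ~ U (fun _ => False),
      (forall A B : nset, U A -> (forall n, A n -> B n) -> U B),
      (forall A B : nset, U A -> U B -> U (fun n => A n /\ B n))
    & (forall A : nset, U A \/ U (fun n => Npos n /\ ~ A n))].

Definition setdiv (A : nset) (n : nat) : nset := fun m => A (m * n).

Definition umul (x y : nset -> Prop) : nset -> Prop :=
  fun A => x (fun n => Npos n /\ y (setdiv A n)).

(* L_i = { a_1 ... a_i : a_j prime }, with L_0 = {1} (empty product). *)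
Definition L (i : nat) : nset :=
  fun n => exists s : seq nat, [/\ size s = i, all prime s & n = \prod_(p <- s) p].

Definition in_closure (A : nset) (x : nset -> Prop) : Prop := x A.

Definition inI (x : nset -> Prop) : Prop :=
  forall i : nat, in_closure (fun n => Npos n /\ ~ L i n) x.

From mathcomp Require Import all_boot.
From Stdlib Require Import Classical.

(* Every n > 0 lies in exactly one L_i, namely for i = Ω(n), the number of
   prime factors of n counted with multiplicity, and Ω(mn) = Ω(m) + Ω(n).
   An ultrafilter lies in I exactly when it contains no level L_j.  If
   y ∈ I, then for each n ∈ L_j the set (N \ L_i)/n contains every m with
   Ω(m) ≠ i - j, which is a member of y; hence zy ∈ I for every z.  If
   x ∈ I and y ∉ I, then y contains some L_k, and (N \ L_i)/n contains L_k
   as soon as Ω(n) ≠ i - k, which is the case on a member of x; hence xy ∈ I. *)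

Lemma prime_mem_prod p s :
  prime p -> all prime s -> p %| \prod_(q <- s) q -> p \in s.
Proof.
move=> p_pr /allP s_pr; rewrite Euclid_dvd_prod // big_has => /hasP[q qs].
by rewrite dvdn_prime2 ?(s_pr q qs) // => /eqP ->.
Qed.

Lemma prime_seq_prod_perm s t : all prime s -> all prime t ->
  \prod_(p <- s) p = \prod_(q <- t) q -> perm_eq s t.
Proof.
elim: s t => [|p s IHs] t /=.
  case: t => [|q t] //= _ /andP[q_pr _]; rewrite big_nil big_cons => /esym/eqP.
  by rewrite muln_eq1 => /andP[/eqP q1]; rewrite q1 in q_pr.
case/andP=> p_pr s_pr t_pr; rewrite big_cons => prod_eq.
have pt : p \in t by apply: prime_mem_prod => //; rewrite -prod_eq dvdn_mulr.
have t_rem := perm_to_rem pt; rewrite perm_sym in t_rem.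
apply: (perm_trans _ t_rem); rewrite perm_cons; apply: IHs => //.
  by apply/allP=> q /mem_rem; apply/allP.
apply/eqP; rewrite -(eqn_pmul2l (prime_gt0 p_pr)) prod_eq.
by rewrite -(perm_big _ t_rem) big_cons.
Qed.

Lemma L_gt0 [i n] : L i n -> 0 < n.
Proof.
case=> s [_ /allP s_pr ->]; rewrite big_seq prodn_cond_gt0 // => p /s_pr.
exact: prime_gt0.
Qed.

Lemma L_mul [i j m n] : L i m -> L j n -> L (i + j) (m * n).
Proof.
case=> s [<- s_pr ->] [t [<- t_pr ->]]; exists (s ++ t).
by rewrite size_cat all_cat s_pr t_pr big_cat.
Qed.

Lemma L_index_uniq [i j n] : L i n -> L j n -> i = j.
Proof.
case=> s [<- s_pr ->] [t [<- t_pr prod_eq]].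
exact/perm_size/prime_seq_prod_perm.
Qed.

Lemma L_index_exists [n] : 0 < n -> exists i, L i n.
Proof.
move=> n_gt0; pose s := flatten [seq nseq f.2 f.1 | f <- prime_decomp n].
exists (size s), s; split=> //.
  apply/allP=> p /flattenP[_ /mapP[[q e] qe ->] /nseqP[-> _]].
  by case: (mem_prime_decomp qe).
rewrite {1}(prod_prime_decomp n_gt0) big_flatten big_map.
by apply: eq_bigr => f _; rewrite big_nseq iter_muln_1.
Qed.

Lemma L_mul_index [i j k m n] : L i m -> L j n -> L k (m * n) -> i + j = k.
Proof. by move=> Lm Ln; apply: (L_index_uniq (L_mul Lm Ln)). Qed.

Section Ultrafilter.

Context {x : nset -> Prop} (x_uf : is_ultrafilter x).

Lemma uf_Npos : x Npos.
Proof. by case: x_uf. Qed.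

Lemma uf_sub [A B : nset] : x A -> (forall n, A n -> B n) -> x B.
Proof. by case: x_uf => _ _ x_sub _ _; apply: x_sub. Qed.

Lemma uf_Npos_sub (B : nset) : (forall n, 0 < n -> B n) -> x B.
Proof. exact: uf_sub uf_Npos. Qed.

Lemma not_inI_L : ~ inI x -> exists k, x (L k).
Proof.
case: x_uf => _ _ _ _ x_compl /not_all_ex_not[k notLk_out].
exists k; have [//|Lk_compl] := x_compl (fun n => Npos n /\ ~ L k n).
apply: (uf_sub Lk_compl) => n [n_gt0 notLk_out_n].
by apply: NNPP => notLkn; apply: notLk_out_n.
Qed.

(* The excluded set {n : Ω(n) = i - k} is a single level, or empty if k > i. *)
Lemma inI_index_avoid i k :
  inI x -> x (fun n => Npos n /\ forall j, L j n -> j + k != i).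
Proof.
move=> xI; have [k_le_i|i_lt_k] := leqP k i.
  apply: (uf_sub (xI (i - k))) => n [n_gt0 notL]; split=> // j Lj.
  by apply/eqP=> jk_i; apply: notL; rewrite -jk_i addnK.
apply: uf_Npos_sub => n n_gt0; split=> // j _.
by rewrite neq_ltn (leq_trans i_lt_k) ?orbT ?leq_addl.
Qed.

End Ultrafilter.

Lemma inI_umull z y : is_ultrafilter z -> is_ultrafilter y ->
  inI y -> inI (umul z y).
Proof.
move=> z_uf y_uf yI i; apply: (uf_Npos_sub z_uf) => n n_gt0; split=> //.
have [j Ln] := L_index_exists n_gt0.
apply: (uf_sub y_uf (inI_index_avoid y_uf i j yI)) => m [m_gt0 m_avoid].
split; first by rewrite /Npos muln_gt0 m_gt0.
move=> Lmn; have [k Lm] := L_index_exists m_gt0.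
by have := m_avoid k Lm; rewrite (L_mul_index Lm Ln Lmn) eqxx.
Qed.

Lemma inI_umulr x y : is_ultrafilter x -> is_ultrafilter y ->
  inI x -> inI (umul x y).
Proof.
move=> x_uf y_uf xI; have [yI|yNI] := classic (inI y).
  exact: inI_umull.
have [k yLk] := not_inI_L y_uf yNI => i.
apply: (uf_sub x_uf (inI_index_avoid x_uf i k xI)) => n [n_gt0 n_avoid].
split=> //; have [j Ln] := L_index_exists n_gt0.
apply: (uf_sub y_uf yLk) => m Lm.
split; first by rewrite /Npos muln_gt0 (L_gt0 Lm).
move=> Lmn; have := n_avoid j Ln.
by rewrite addnC (L_mul_index Lm Ln Lmn) eqxx.
Qed.

Theorem theorem3p7 :
  forall x y : nset -> Prop, is_ultrafilter x -> is_ultrafilter y ->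
    (inI x -> inI y -> inI (umul x y) /\ inI (umul y x)) /\
    (inI x -> ~ inI y -> inI (umul x y) /\ inI (umul y x)).
Proof.
move=> x y x_uf y_uf.
have ideal : inI x -> inI (umul x y) /\ inI (umul y x).
  by move=> xI; split; [apply: inI_umulr | apply: inI_umull].
by split=> xI _; apply: ideal.
Qed.
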